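(* Every $\mathbb{C}$-algebra $R(A,P_0)$ obtained from data $(A,P_0)$ as described in the context is isomorphic as a $\mathbb{C}$-algebra (forgetting the $K_0$-grading) to a product $$\bigotimes_{i=1}^t R(A^{(i)},P_0^{(i)}) \otimes \mathbb{C}[S_1,\ldots,S_{m'}],$$ where the algebras $R(A^{(i)},P_0^{(i)})$ (each obtained by the same construction from data $(A^{(i)},P_0^{(i)})$) are indecomposable with $m^{(i)} = 0$ for all $i=1,\ldots,t$, and $m'\geq m$ holds.
   Context: Fix integers $r \geq c > 0$, $n_0,\ldots,n_r>0$ and $m\geq 0$, and set $n:=n_0+\ldots+n_r$. Let $A=(a_0,\ldots,a_r)$ be a $(c+1)\times(r+1)$ complex matrix of full rank with pairwise linearly independent columns $a_i$, and let $P_0$ be the $r\times(n+m)$ matrix built from tuples $l_i=(l_{i1},\ldots,l_{in_i})$ of positive integers, $$P_0=\left[\begin{array}{ccccccc} -l_0&l_1&&&0&\ldots&0\\ \vdots&&\ddots&&\vdots&&\vdots\\ -l_0&&&l_r&0&\ldots&0\end{array}\right].$$ In the polynomial ring $\mathbb{C}[T_{ij},S_k]$ ($i=0,\ldots,r$, $j=1,\ldots,n_i$, $k=1,\ldots,m$) set $T_i^{l_i}:=T_{i1}^{l_{i1}}\cdots T_{in_i}^{l_{in_i}}$ and, for $v\in\mathbb{C}^{r+1}$, $g_v:=v_0T_0^{l_0}+\ldots+v_rT_r^{l_r}$. Define $R(A,P_0):=\mathbb{C}[T_{ij},S_k]/\langle g_v;\ v\in\ker(A)\rangle$, graded by $K_0:=\mathbb{Z}^{n+m}/\mathrm{im}(P_0^*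 )$ via $\deg(T_{ij})$, $\deg(S_k)$ the images of the canonical basis vectors. The matrix $A$ is called indecomposable if for any subset $I$ of the column indices one has $\{0\}\neq \mathrm{Lin}(a_i;\ i\in I)\cap\mathrm{Lin}(a_j;\ j\notin I)$; the ring $R(A,P_0)$ is called indecomposable if $A$ is indecomposable and $l_{ij}n_i>1$ holds for all $i$ (and $j$). Here $m^{(i)}$ denotes the number of variables $S_k$ in the data for $R(A^{(i)},P_0^{(i)})$. *)

From mathcomp Require Import all_boot all_algebra.
From mathcomp Require Import complex Rstruct.
From mathcomp Require Export mpoly.

Unset Printing Implicit Defensive.

Import GRing.Theory.
Local Open Scope ring_scope.

Definition CC : numClosedFieldType := (Rdefinitions.R)[i].

Notation Pol N := {mpoly CC[N]}.

(* The variable X_k of C[X_0..X_(N-1)] (0 if k >= N; only used for k < N). *)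
Definition Xv (N k : nat) : Pol N :=
  match insub k with Some i => 'X_i | None => 0 end.

(* The variables T_ij (i = 0..r, j = 1..n_i) and S_k
   (k = 1..m) are numbered consecutively: T_ij is variable number
   n_0 + ... + n_(i-1) + (j-1), and S_k is variable number n + (k-1),
   where n = n_0 + ... + n_r.  The matrix P_0 is encoded by the exponent
   tuples l_i (field [l]: l i j is l_(i,j+1), j < n_i) and by m.           *)
Record data := Data {
  d_r : nat;
  d_c : nat;
  d_ns : 'I_d_r.+1 -> nat;
  d_m : nat;
  d_A : 'M[CC]_(d_c.+1, d_r.+1);
  d_l : 'I_d_r.+1 -> nat -> nat
}.

Definition d_n (D : data) : nat := \sum_(i < (d_r D).+1) d_ns D i.

Definition nvars (D : data) : nat := (d_n D + d_m D)%N.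

Definition offs (D : data) (i : 'I_(d_r D).+1) : nat :=
  \sum_(k < (d_r D).+1 | (k < i)%N) d_ns D k.

Definition Tmon (D : data) (i : 'I_(d_r D).+1) : Pol (nvars D) :=
  \prod_(j < d_ns D i) Xv (nvars D) (offs D i + j) ^+ d_l D i j.

Definition g_v (D : data) (v : 'cV[CC]_(d_r D).+1) : Pol (nvars D) :=
  \sum_(i < (d_r D).+1) v i 0 *: Tmon D i.

Definition rel_gens (D : data) (p : Pol (nvars D)) : Prop :=
  exists v : 'cV[CC]_(d_r D).+1, d_A D *m v = 0 /\ p = g_v D v.

Definition pairwise_lin_indep_cols {c r : nat} (A : 'M[CC]_(c.+1, r.+1)) :=
  forall i j : 'I_r.+1, i != j ->
    forall a b : CC, a *: col i A + b *: col j A = 0 -> a = 0 /\ b = 0.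

Definition valid_data (D : data) : Prop :=
  [/\ (d_c D <= d_r D)%N /\ (0 < d_c D)%N,
      (forall i, 0 < d_ns D i)%N,
      \rank (d_A D) = (d_c D).+1,
      pairwise_lin_indep_cols (d_A D)
    & forall i j, (j < d_ns D i)%N -> (0 < d_l D i j)%N].

Definition indecomposable_mx {c r : nat} (A : 'M[CC]_(c.+1, r.+1)) : Prop :=
  forall I : {set 'I_r.+1}, I != set0 -> I != setT ->
    exists (al be : 'I_r.+1 -> CC),
      \sum_(i in I) al i *: col i A = \sum_(j in ~: I) be j *: col j A /\
      \sum_(i in I) al i *: col i A != 0.

Definition indecomposable (D : data) : Prop :=
  indecomposable_mx (d_A D) /\
  forall i j, (j < d_ns D i)%N -> (1 < d_l D i j * d_ns D i)%N.

Definition in_ideal {N : nat} (G : Pol N -> Prop) (p : Pol N) : Prop :=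
  exists k (q g : 'I_k -> Pol N),
    (forall s, G (g s)) /\ p = \sum_(s < k) q s * g s.

Definition subst {N M : nat} (f : 'I_N -> Pol M) (p : Pol N) : Pol M :=
  comp_mpoly [tuple f s | s < N] p.

(* C[X]/<G> and C[Y]/<H> are isomorphic as C-algebras: there are C-algebra
   homomorphisms in both directions (given by the images of the variables)
   that are well defined on the quotients and mutually inverse there.       *)
Definition presented_iso {N M : nat} (G : Pol N -> Prop) (H : Pol M -> Prop)
  : Prop :=
  exists (f : 'I_N -> Pol M) (h : 'I_M -> Pol N),
    [/\ forall p, in_ideal G p -> in_ideal H (subst f p),
        forall q, in_ideal H q -> in_ideal G (subst h q),
        forall s, in_ideal G (subst h (f s) - 'X_s)
      & forall s, in_ideal H (subst f (h s) - 'X_s)].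

(* The tensor product (R(A^(1),P^(1)) ⊗ ... ⊗ R(A^(t),P^(t))) ⊗ C[S_1..S_m']
   presented as C[all variables of all factors, S_1..S_m'] modulo the ideal
   generated by the (renamed) relations of all factors: the variables of
   factor u occupy the block starting at nvars(D_0) + ... + nvars(D_(u-1)),
   and the free variables S_1..S_m' come last.                              *)
Definition tens_nvars {t : nat} (Ds : 'I_t -> data) (m' : nat) : nat :=
  (\sum_(u < t) nvars (Ds u) + m')%N.

Definition tens_offs {t : nat} (Ds : 'I_t -> data) (u : 'I_t) : nat :=
  \sum_(w < t | (w < u)%N) nvars (Ds w).

Definition tens_gens {t : nat} (Ds : 'I_t -> data) (m' : nat)
  (p : Pol (tens_nvars Ds m')) : Prop :=
  exists (u : 'I_t) (g : Pol (nvars (Ds u))),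
    rel_gens (Ds u) g /\
    p = subst (fun s : 'I_(nvars (Ds u)) =>
                 Xv (tens_nvars Ds m') (tens_offs Ds u + s)) g.

(* Call i a unit index when T_i^{l_i} is a single variable with exponent one.
   Choose a maximal set J of unit indices carrying kernel vectors w_j of A
   with w_j(j) = 1 and w_j(j') = 0 for the other j' in J: the relations
   g_{w_j} express T_j through the remaining monomials, so these variables
   are eliminated.  Let K be the space of kernel vectors of A vanishing on J.
   The index sets I such that restricting any vector of K to I stays in the
   kernel of A form a Boolean algebra; its atoms partition the indices.  An
   atom supporting a nonzero vector of K contains no unit index, by the
   maximality of J, and gives an indecomposable factor (the columns of A in
   the atom, replaced by a row basis); every other variable, the S_k
   included, is free. *)

From mathcomp Require Import all_boot all_algebra.
From mathcomp Require Import order zify.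
From Stdlib Require Import Classical ClassicalEpsilon.
Import GRing.Theory.
Local Open Scope ring_scope.

Section Ideal.
Context {N : nat}.
Implicit Types (G : Pol N -> Prop).

Lemma in_ideal0 G : in_ideal G 0.
Proof.
exists 0%N, (fun _ => 0), (fun _ => 0); split; first by case.
by rewrite big_ord0.
Qed.

Lemma in_idealD G p q : in_ideal G p -> in_ideal G q -> in_ideal G (p + q).
Proof.
case=> [k1 [q1 [g1 [H1 ->]]]] [k2 [q2 [g2 [H2 ->]]]].
pose glue (F1 : 'I_k1 -> Pol N) (F2 : 'I_k2 -> Pol N) (s : 'I_(k1 + k2)) :=
  match split s with inl a => F1 a | inr b => F2 b end.
exists (k1 + k2)%N, (glue q1 q2), (glue g1 g2).
split; first by move=> s; rewrite /glue; case: (split s).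
rewrite big_split_ord /glue /=; congr (_ + _); apply: eq_bigr => i _.
  by rewrite -[lshift _ _]/(unsplit (inl i)) unsplitK.
by rewrite -[rshift _ _]/(unsplit (inr i)) unsplitK.
Qed.

Lemma in_idealMl G a p : in_ideal G p -> in_ideal G (a * p).
Proof.
case=> k [q [g [Hg ->]]]; exists k, (fun s => a * q s), g; split => //.
by rewrite mulr_sumr; apply: eq_bigr => s _; rewrite mulrA.
Qed.

Lemma in_idealN G p : in_ideal G p -> in_ideal G (- p).
Proof. by move=> H; rewrite -mulN1r; apply: in_idealMl. Qed.

Lemma in_ideal_gen G p : G p -> in_ideal G p.
Proof.
move=> Gp; exists 1%N, (fun _ => 1), (fun _ => p); split => //.
by rewrite big_ord1 mul1r.
Qed.

Lemma in_ideal_sum G (I : Type) (r : seq I) (P : pred I) (F : I -> Pol N) :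
  (forall i, P i -> in_ideal G (F i)) -> in_ideal G (\sum_(i <- r | P i) F i).
Proof.
move=> H; elim/big_rec: _ => [|i x Pi Hx]; first exact: in_ideal0.
by apply: in_idealD => //; apply: H.
Qed.

End Ideal.

Lemma XvE N (i : 'I_N) : Xv N i = 'X_i.
Proof. by rewrite /Xv valK. Qed.

Lemma XvE_ltn {N k} (h : (k < N)%N) : Xv N k = 'X_(Ordinal h).
Proof. by rewrite /Xv insubT. Qed.

Section Subst.
Context {N M : nat} (f : 'I_N -> Pol M).

Lemma substX (i : 'I_N) : subst f 'X_i = f i.
Proof. by rewrite /subst comp_mpolyXU -tnth_nth tnth_mktuple. Qed.

Lemma substXv_ltn {k} (h : (k < N)%N) : subst f (Xv N k) = f (Ordinal h).
Proof. by rewrite XvE_ltn substX. Qed.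

Lemma substN p : subst f (- p) = - subst f p.
Proof. by rewrite /subst rmorphN. Qed.

Lemma substM p q : subst f (p * q) = subst f p * subst f q.
Proof. by rewrite /subst rmorphM. Qed.

Lemma substZ c p : subst f (c *: p) = c *: subst f p.
Proof. by rewrite /subst comp_mpolyZ. Qed.

Lemma substXn p k : subst f (p ^+ k) = subst f p ^+ k.
Proof. by rewrite /subst rmorphXn. Qed.

Lemma subst_sum (I : Type) (r : seq I) (P : pred I) (F : I -> Pol N) :
  subst f (\sum_(i <- r | P i) F i) = \sum_(i <- r | P i) subst f (F i).
Proof. by rewrite /subst rmorph_sum. Qed.

Lemma subst_prod (I : Type) (r : seq I) (P : pred I) (F : I -> Pol N) :
  subst f (\prod_(i <- r | P i) F i) = \prod_(i <- r | P i) subst f (F i).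
Proof. by rewrite /subst rmorph_prod. Qed.

Lemma subst_ideal (G : Pol N -> Prop) (H : Pol M -> Prop) :
  (forall g, G g -> in_ideal H (subst f g)) ->
  forall p, in_ideal G p -> in_ideal H (subst f p).
Proof.
move=> HG p [k [q [g [Hg ->]]]]; rewrite subst_sum; apply: in_ideal_sum => s _.
by rewrite substM; apply: in_idealMl; apply: HG.
Qed.

End Subst.

Lemma presented_iso_by_subst {N M : nat} {G : Pol N -> Prop} {H : Pol M -> Prop}
    {f : 'I_N -> Pol M} {h : 'I_M -> Pol N} :
  (forall g, G g -> in_ideal H (subst f g)) ->
  (forall g, H g -> in_ideal G (subst h g)) ->
  (forall s, in_ideal G (subst h (f s) - 'X_s)) ->
  (forall s, in_ideal H (subst f (h s) - 'X_s)) ->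
  presented_iso G H.
Proof.
by move=> fG hH hf fh; exists f, h; split => //; apply: subst_ideal.
Qed.

Definition offset {k} (a : 'I_k -> nat) (i : nat) : nat :=
  \sum_(w < k | (w < i)%N) a w.

Section Offset.
Context {k : nat} {a : 'I_k -> nat}.

Lemma offset_inj {i i' j j'} : (j < a i)%N -> (j' < a i')%N ->
  (offset a i + j = offset a i' + j')%N -> i = i' /\ j = j'.
Proof.
move=> lj lj' E.
have := @tagnat.eq_Rank k a i i' (Ordinal lj) (Ordinal lj').
rewrite !tagnat.RankEsum /= -/(offset a i) -/(offset a i') E eqxx.
by move/esym/andP => [/eqP -> /eqP ->].
Qed.

Lemma offset_surj p : (p < \sum_i a i)%N ->
  exists i j, (j < a i)%N /\ p = (offset a i + j)%N.
Proof.
move=> lp; pose s : 'I_(\sum_i a i) := Ordinal lp.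
exists (tagnat.sig1 s), (tagnat.sig2 s); split => //.
by have := tagnat.rect s.
Qed.

Lemma offset_ltn {i j} : (j < a i)%N -> (offset a i + j < \sum_i a i)%N.
Proof.
move=> lj; have := ltn_ord (@tagnat.Rank k a i (Ordinal lj)).
by rewrite tagnat.RankEsum.
Qed.

End Offset.

Section PivotFamily.
Context {c r : nat} (A : 'M[CC]_(c.+1, r.+1)) (L : {set 'I_r.+1}).

Definition pivot_family (J : {set 'I_r.+1}) (w : 'I_r.+1 -> 'cV[CC]_r.+1) :=
  J \subset L /\ forall j, j \in J ->
    [/\ A *m w j = 0, w j j 0 = 1 & forall j', j' \in J -> j' != j -> w j j' 0 = 0].

Definition pivots_maximal (J : {set 'I_r.+1}) :=
  forall v : 'cV[CC]_r.+1, A *m v = 0 -> (forall j, j \in J -> v j 0 = 0) ->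
    forall i, i \in L -> v i 0 = 0.

Lemma pivot_family_add {J w v i} :
  pivot_family J w -> A *m v = 0 -> (forall j, j \in J -> v j 0 = 0) ->
  i \in L -> v i 0 != 0 ->
  pivot_family (i |: J)
    (fun j => if j == i then (v i 0)^-1 *: v else w j - (w j i 0 / v i 0) *: v).
Proof.
move=> [sJL Hw] Av vJ iL vi; have iJ : i \notin J by apply: contra vi => /vJ ->.
split; first by rewrite subUset sub1set iL.
move=> j; rewrite !inE => /orP [/eqP ->|jJ].
  rewrite eqxx; split.
  - by rewrite -scalemxAr Av scaler0.
  - by rewrite mxE mulVf.
  - move=> j'; rewrite !inE => /orP [/eqP -> |j'J]; first by rewrite eqxx.
    by move=> _; rewrite mxE (vJ _ j'J) mulr0.
have /negbTE -> : j != i by apply: contraNneq iJ => <-.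
have [wA wjj wj0] := Hw j jJ; split.
- by rewrite mulmxBr -scalemxAr Av scaler0 wA subr0.
- by rewrite !mxE wjj (vJ _ jJ) mulr0 subr0.
- move=> j'; rewrite !inE => /orP [/eqP -> |j'J] j'j.
    by rewrite !mxE mulfVK ?subrr.
  by rewrite !mxE (wj0 _ j'J j'j) (vJ _ j'J) mulr0 subr0.
Qed.

Lemma exists_maximal_pivot_family :
  exists J w, pivot_family J w /\ pivots_maximal J.
Proof.
suff ext n J w : pivot_family J w -> (#|L :\: J| <= n)%N ->
    exists J' w', pivot_family J' w' /\ pivots_maximal J'.
  apply: (ext #|L| set0 (fun _ => 0)); last by rewrite setD0.
  by split; [rewrite sub0set | move=> j; rewrite inE].
elim: n J w => [|n IH] J w HJ Hn.
  exists J, w; split => // v _ vJ i iL; apply: vJ.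
  move: Hn; rewrite leqn0 cards_eq0 => /eqP/setP/(_ i).
  by rewrite !inE iL andbT => /negbFE.
have [|] := classic (pivots_maximal J); first by exists J, w.
move=> /not_all_ex_not [v /not_all_ex_not [Av /not_all_ex_not [vJ /not_all_ex_not [i]]]].
move=> /(imply_to_and (i \in L)) [iL /eqP vi].
apply: IH (pivot_family_add HJ Av vJ iL vi) _.
have iJ : i \notin J by apply: contra vi => /vJ ->.
rewrite -ltnS; apply: leq_trans Hn; apply: proper_card.
rewrite setDUr; apply/properP; split; first exact: subsetIr.
by exists i; rewrite !inE ?iL ?iJ ?eqxx.
Qed.

End PivotFamily.

Definition classicb (P : Prop) : bool :=
  if excluded_middle_informative P then true else false.

Lemma classicbP P : reflect P (classicb P).
Proof. by rewrite /classicb; case: excluded_middle_informative; constructor. Qed.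

(* The matrix X seen with k.-1.+1 rows: junk (zero) when X has no rows. *)
Definition nz_rows_mx {k n : nat} (X : 'M[CC]_(k, n)) : 'M[CC]_(k.-1.+1, n) :=
  match k as k0 return 'M[CC]_(k0, n) -> 'M[CC]_(k0.-1.+1, n) with
  | 0 => fun _ => 0 | k'.+1 => fun X => X end X.

Lemma nz_rows_mx_ker k n (X : 'M[CC]_(k, n)) (x : 'cV[CC]_n) :
  (0 < k)%N -> (nz_rows_mx X *m x == 0) = (X *m x == 0).
Proof. by case: k X. Qed.

Lemma nz_rows_mx_rank k n (X : 'M[CC]_(k, n)) :
  (0 < k)%N -> \rank (nz_rows_mx X) = \rank X.
Proof. by case: k X. Qed.

Lemma row_base_ker m n (X : 'M[CC]_(m, n)) (x : 'cV[CC]_n) :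
  (row_base X *m x == 0) = (X *m x == 0).
Proof.
have /submxP [D1 E1] : (row_base X <= X)%MS by rewrite eq_row_base.
have /submxP [D2 E2] : (X <= row_base X)%MS by rewrite eq_row_base.
by apply/eqP/eqP => H; rewrite ?E1 ?E2 -mulmxA H mulmx0.
Qed.

Lemma mulmx_col_sum m n (X : 'M[CC]_(m, n)) (x : 'cV[CC]_n) :
  X *m x = \sum_k x k 0 *: col k X.
Proof.
apply/colP => i; rewrite !mxE summxE; apply: eq_bigr => k _.
by rewrite !mxE mulrC.
Qed.

Lemma scale_col2_mulmx m n (X : 'M[CC]_(m, n)) i j (a b : CC) :
  a *: col i X + b *: col j X = X *m (a *: delta_mx i 0 + b *: delta_mx j 0).
Proof. by rewrite mulmxDr -!scalemxAr -!colE. Qed.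

Lemma col_dep_rank_le1 {c n k : nat} (X : 'M[CC]_(c, k)) (Y : 'M[CC]_(k, n)) k1 k2 :
  (k <= 1)%N -> exists a b : CC, (a != 0 \/ b != 0) /\
     a *: col k1 (X *m Y) + b *: col k2 (X *m Y) = 0.
Proof.
case: k X Y => [|[|//]] X Y _.
  exists 1, 0; split; first by left; rewrite oner_neq0.
  by rewrite thinmx0 mul0mx !col0 !scaler0 addr0.
have colXY k0 : col k0 (X *m Y) = Y 0 k0 *: col 0 X.
  by apply/colP => x; rewrite !mxE big_ord1 mulrC.
have [Y1|Y1] := eqVneq (Y 0 k1) 0.
  exists 1, 0; split; first by left; rewrite oner_neq0.
  by rewrite colXY Y1 !(scale0r, scaler0, addr0).
exists (Y 0 k2), (- Y 0 k1); split; first by right; rewrite oppr_eq0.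
by rewrite !colXY !scalerA mulNr mulrC scaleNr subrr.
Qed.

Lemma rank_gt1_indep_cols {c n : nat} (X : 'M[CC]_(c, n)) i1 i2 :
  (forall a b, a *: col i1 X + b *: col i2 X = 0 -> a = 0 /\ b = 0) ->
  (1 < \rank X)%N.
Proof.
move=> indep; rewrite ltnNge; apply/negP => le1.
have /submxP [Y EX] : (X <= row_base X)%MS by rewrite eq_row_base.
have [a [b [nz E]]] := col_dep_rank_le1 Y (row_base X) i1 i2 le1.
rewrite -EX in E; have [a0 b0] := indep _ _ E.
by case: nz; rewrite ?a0 ?b0 eqxx.
Qed.

Lemma ker_support_two {c r : nat} {A : 'M[CC]_(c.+1, r.+1)} {v : 'cV[CC]_r.+1} :
  pairwise_lin_indep_cols A -> (0 < r)%N -> A *m v = 0 -> v != 0 ->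
  exists i1 i2, [/\ i1 != i2, v i1 0 != 0 & v i2 0 != 0].
Proof.
move=> indep r_gt0 Av nz.
have /existsP [i1 vi1] : [exists i, v i 0 != 0].
  apply: contraR nz => /existsPn v0; apply/eqP/colP => i.
  by rewrite mxE; apply/eqP/negPn/v0.
have [/existsP [i2 /andP [ne vi2]]|] := boolP [exists i, (i != i1) && (v i 0 != 0)].
  by exists i1, i2; rewrite eq_sym.
move=> /existsPn vi0; pose j := lift i1 (Ordinal r_gt0).
have Av1 : A *m v = v i1 0 *: col i1 A + 0 *: col j A.
  rewrite scale0r addr0 mulmx_col_sum (bigD1 i1) // big1 /= ?addr0 // => i ne.
  by have := vi0 i; rewrite ne /= negbK => /eqP ->; rewrite scale0r.
have [v0 _] := indep i1 j (neq_lift _ _) _ _ (etrans (esym Av1) Av).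
by move: vi1; rewrite v0 eqxx.
Qed.

Definition restrict {n} (I : {set 'I_n}) (v : 'cV[CC]_n) : 'cV[CC]_n :=
  \col_i (if i \in I then v i 0 else 0).

Lemma restrictE n (I : {set 'I_n}) v i :
  restrict I v i 0 = if i \in I then v i 0 else 0.
Proof. by rewrite mxE. Qed.

Section SetEnum.
Context {n : nat} (B : {set 'I_n.+1}).

(* B is enumerated by 'I_(#|B|.-1).+1, the shape of index types in [data]. *)
Definition set_r : nat := #|B|.-1.
Definition set_elt (k : 'I_set_r.+1) : 'I_n.+1 := nth ord0 (enum B) k.
Definition set_proj (v : 'cV[CC]_n.+1) : 'cV[CC]_set_r.+1 := \col_k v (set_elt k) 0.
Definition set_ext (x : 'cV[CC]_set_r.+1) : 'cV[CC]_n.+1 :=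
  \col_i (if i \in B then x (inord (index i (enum B))) 0 else 0).

Hypothesis B_gt0 : (0 < #|B|)%N.

Lemma size_enum_set : size (enum B) = set_r.+1.
Proof. by rewrite prednK // cardE. Qed.

Lemma set_elt_mem k : set_elt k \in B.
Proof. by rewrite -mem_enum mem_nth // size_enum_set. Qed.

Lemma set_elt_inj : injective set_elt.
Proof.
move=> k k' /eqP; rewrite nth_uniq ?size_enum_set ?enum_uniq // => /eqP.
exact: val_inj.
Qed.

Lemma set_elt_index {i} : i \in B ->
  (index i (enum B) < set_r.+1)%N /\ nth ord0 (enum B) (index i (enum B)) = i.
Proof.
by move=> iB; rewrite -size_enum_set index_mem mem_enum nth_index ?mem_enum.
Qed.

Lemma index_set_elt k : index (set_elt k) (enum B) = k.
Proof. by rewrite index_uniq ?size_enum_set ?enum_uniq. Qed.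

Lemma big_set_elt {V : nmodType} (F : 'I_n.+1 -> V) :
  \sum_(i in B) F i = \sum_k F (set_elt k).
Proof. by rewrite -big_enum (big_nth ord0) size_enum_set big_mkord. Qed.

Lemma sum_set_elt {V : nmodType} (F : 'I_n.+1 -> V) :
  (forall i, i \notin B -> F i = 0) -> \sum_i F i = \sum_k F (set_elt k).
Proof.
move=> F0; rewrite (bigID (mem B)) /= [X in _ + X]big1 ?addr0 //.
exact: big_set_elt.
Qed.

Lemma set_ext_elt x k : set_ext x (set_elt k) 0 = x k 0.
Proof. by rewrite mxE set_elt_mem index_set_elt inord_val. Qed.

Lemma set_ext_proj v : set_ext (set_proj v) = restrict B v.
Proof.
apply/colP => i; rewrite restrictE mxE; case: ifP => // iB.
by have [lt E] := set_elt_index iB; rewrite mxE /set_elt inordK // E.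
Qed.

Lemma mulmx_set_ext m (X : 'M[CC]_(m, n.+1)) x :
  colsub set_elt X *m x = X *m set_ext x.
Proof.
rewrite !mulmx_col_sum (@sum_set_elt _ (fun i => set_ext x i 0 *: col i X)).
  by apply: eq_bigr => k _; rewrite set_ext_elt col_colsub.
by move=> i iB; rewrite mxE (negbTE iB) scale0r.
Qed.

Lemma set_ext_restrict (I : {set 'I_set_r.+1}) v :
  set_ext (restrict I (set_proj v)) = restrict (set_elt @: I) v.
Proof.
apply/colP => i; rewrite restrictE mxE.
have [iB|iB] := boolP (i \in B); last first.
  by case: ifP => // /imsetP [k _ ik]; move: iB; rewrite ik set_elt_mem.
have [lt Ei] := set_elt_index iB; set k := inord _.
have ki : set_elt k = i by rewrite /set_elt inordK.
by rewrite restrictE -ki (mem_imset _ _ set_elt_inj) mxE.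
Qed.

End SetEnum.

Section Decomposition.
Variable D : data.
Hypothesis HD : valid_data D.
Local Notation r := (d_r D).
Local Notation A := (d_A D).

Definition unit_idx : {set 'I_r.+1} :=
  [set i | (d_ns D i == 1%N) && (d_l D i 0 == 1%N)].

Variables (J : {set 'I_r.+1}) (w : 'I_r.+1 -> 'cV[CC]_r.+1).
Hypothesis HJ : pivot_family A unit_idx J w.
Hypothesis HP : pivots_maximal A unit_idx J.

Definition kerJ (v : 'cV[CC]_r.+1) := A *m v = 0 /\ forall j, j \in J -> v j 0 = 0.
Definition splitting (I : {set 'I_r.+1}) := forall v, kerJ v -> A *m restrict I v = 0.
Definition block (i : 'I_r.+1) := \bigcap_(I | classicb (splitting I) && (i \in I)) I.
Definition carries_ker (B : {set 'I_r.+1}) :=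
  classicb (exists v, [/\ kerJ v, v != 0 & forall i, i \notin B -> v i 0 = 0]).

Lemma carries_kerP (B : {set 'I_r.+1}) :
  reflect (exists v, [/\ kerJ v, v != 0 & forall i, i \notin B -> v i 0 = 0])
          (carries_ker B).
Proof. exact: classicbP. Qed.

Lemma splitting_kerJ I v : splitting I -> kerJ v -> kerJ (restrict I v).
Proof.
move=> sI [Av vJ]; split; first exact: sI.
by move=> j jJ; rewrite restrictE vJ //; case: ifP.
Qed.

Lemma splittingT : splitting setT.
Proof.
move=> v [Av _]; rewrite -Av; congr (_ *m _); apply/colP => i.
by rewrite restrictE inE.
Qed.

Lemma splittingI I1 I2 : splitting I1 -> splitting I2 -> splitting (I1 :&: I2).
Proof.
move=> s1 s2 v Kv.
have -> : restrict (I1 :&: I2) v = restrict I1 (restrict I2 v).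
  by apply/colP => i; rewrite !restrictE inE; case: (i \in I1); case: (i \in I2).
exact/s1/splitting_kerJ.
Qed.

Lemma splittingC I : splitting I -> splitting (~: I).
Proof.
move=> sI v Kv; have -> : restrict (~: I) v = v - restrict I v.
  by apply/colP => i; rewrite !mxE inE; case: (i \in I); rewrite ?subrr ?subr0.
by rewrite mulmxBr (sI v Kv) subr0; case: Kv.
Qed.

Lemma splitting_block i : splitting (block i).
Proof.
apply: (big_ind splitting); [exact: splittingT | exact: splittingI |].
by move=> I /andP [/classicbP].
Qed.

Lemma block_mem i : i \in block i.
Proof. by apply/bigcapP => I /andP []. Qed.

Lemma block_min {I i} : splitting I -> i \in I -> block i \subset I.
Proof. by move=> sI iI; apply: bigcap_inf; rewrite iI andbT; apply/classicbP. Qed.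

(* The blocks are the atoms of the Boolean algebra of splitting sets. *)
Lemma block_eq i j : j \in block i -> block j = block i.
Proof.
move=> ji; have sji : block j \subset block i by apply: block_min (splitting_block i) ji.
apply/eqP; rewrite eqEsubset sji /=.
have [ij|ij] := boolP (i \in block j); first exact: block_min (splitting_block j) ij.
have sD : splitting (block i :&: ~: block j).
  by apply: splittingI; [|apply: splittingC]; apply: splitting_block.
have := @block_min _ i sD; rewrite !inE block_mem ij => /(_ isT) /subsetP /(_ j ji).
by rewrite !inE block_mem andbF.
Qed.

Lemma kerJ_free_block {i v} : ~~ carries_ker (block i) -> kerJ v -> v i 0 = 0.
Proof.
move=> nc Kv; apply: contraNeq nc => vi; apply/carries_kerP.
exists (restrict (block i) v); split.
- exact: splitting_kerJ (splitting_block i) Kv.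
- by apply: contraNneq vi => /colP /(_ i); rewrite restrictE block_mem mxE => ->.
- by move=> k kB; rewrite restrictE (negbTE kB).
Qed.

Lemma unit_idx_free i : i \in unit_idx -> ~~ carries_ker (block i).
Proof.
move=> iL; have K0 v : kerJ v -> v i 0 = 0 by case=> Av vJ; apply: HP Av vJ i iL.
have si : splitting [set i].
  move=> v Kv; have -> : restrict [set i] v = 0; last by rewrite mulmx0.
  by apply/colP => k; rewrite restrictE inE mxE; case: eqP => // ->; apply: K0.
apply/carries_kerP => -[v [Kv /eqP nz supp]]; apply: nz; apply/colP => k; rewrite mxE.
have [kB|] := boolP (k \in block i); last exact: supp.
by move: (subsetP (block_min si (set11 i)) k kB); rewrite inE => /eqP ->; apply: K0.
Qed.

Lemma pivot_unit_idx {j} : j \in J -> j \in unit_idx.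
Proof. by case: HJ => /subsetP sJ _ /sJ. Qed.

Lemma pivot_free j : j \in J -> ~~ carries_ker (block j).
Proof. by move=> /pivot_unit_idx /unit_idx_free. Qed.

Definition kblocks := [set B in [set block i | i : 'I_r.+1] | carries_ker B].
Definition kblock_seq := enum kblocks.
Definition block_mx (B : {set 'I_r.+1}) := colsub (set_elt B) A.
Definition block_data (B : {set 'I_r.+1}) : data :=
  Data (set_r B) (\rank (block_mx B)).-1 (fun k => d_ns D (set_elt B k)) 0
       (nz_rows_mx (row_base (block_mx B))) (fun k => d_l D (set_elt B k)).

Lemma kblockP {B} : B \in kblocks -> carries_ker B /\ exists i, B = block i.
Proof. by rewrite inE => /andP [/imsetP [i _ ->] nc]; split => //; exists i. Qed.

Lemma kblock_block {B} i : B \in kblocks -> i \in B -> block i = B.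
Proof. by case/kblockP => _ [i0 ->]; apply: block_eq. Qed.

Lemma block_kblock {i} : carries_ker (block i) -> block i \in kblocks.
Proof. by move=> nc; rewrite inE nc andbT; apply/imsetP; exists i. Qed.

Lemma kblock_gt0 {B} : B \in kblocks -> (0 < #|B|)%N.
Proof. by case/kblockP => _ [i ->]; apply/card_gt0P; exists i; apply: block_mem. Qed.

Lemma splitting_kblock {B} : B \in kblocks -> splitting B.
Proof. by case/kblockP => _ [i ->]; apply: splitting_block. Qed.

Lemma kblock_not_unit {B i} : B \in kblocks -> i \in B -> i \notin unit_idx.
Proof.
move=> HB iB; have [nc _] := kblockP HB; apply: (contraL _ nc) => /unit_idx_free.
by rewrite (kblock_block i HB iB).
Qed.

Lemma kblock_not_pivot {B i} : B \in kblocks -> i \in B -> i \notin J.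
Proof. by move=> HB iB; apply: contra (kblock_not_unit HB iB); apply: pivot_unit_idx. Qed.

Lemma set_proj_kerJ {B v} : B \in kblocks -> kerJ v -> A *m set_ext B (set_proj B v) = 0.
Proof. by move=> HB Kv; rewrite set_ext_proj ?kblock_gt0 //; apply: splitting_kblock. Qed.

Lemma rank_block_mx {B} : B \in kblocks -> (1 < \rank (block_mx B))%N.
Proof.
move=> HB; have /carries_kerP [v [[Av _] nz supp]] := proj1 (kblockP HB).
have [[cr c0] _ _ indep _] := HD.
have [i1 [i2 [ne v1 v2]]] := ker_support_two indep (leq_trans c0 cr) Av nz.
have inB i : v i 0 != 0 -> i \in B by apply: contraR => /supp ->; rewrite eqxx.
have [l1 E1] := set_elt_index B (kblock_gt0 HB) (inB _ v1).
have [l2 E2] := set_elt_index B (kblock_gt0 HB) (inB _ v2).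
apply: (@rank_gt1_indep_cols _ _ _ (Ordinal l1) (Ordinal l2)) => a b.
by rewrite !col_colsub /set_elt /= E1 E2; apply: indep.
Qed.

Lemma block_data_ker B x : B \in kblocks ->
  (d_A (block_data B) *m x == 0) = (A *m set_ext B x == 0).
Proof.
move=> HB; rewrite /= nz_rows_mx_ker ?row_base_ker ?mulmx_set_ext ?kblock_gt0 //.
exact: ltnW (rank_block_mx HB).
Qed.

Lemma valid_block_data B : B \in kblocks -> valid_data (block_data B).
Proof.
move=> HB; have rk2 := rank_block_mx HB; have B_gt0 := kblock_gt0 HB.
have [_ ns_gt0 _ indep l_gt0] := HD.
split => /=; last by move=> k j; apply: l_gt0.
- by have := rank_leq_col (block_mx B); move: rk2; set k := \rank _; lia.
- by move=> k; apply: ns_gt0.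
- rewrite nz_rows_mx_rank; last exact: ltnW.
  by rewrite prednK ?(ltnW rk2) // eq_row_base.
- move=> k k' ne a b; rewrite scale_col2_mulmx => /eqP; rewrite block_data_ker //.
  rewrite -mulmx_set_ext // => /eqP; rewrite -scale_col2_mulmx !col_colsub.
  by apply: indep; apply: contra ne => /eqP /set_elt_inj ->.
Qed.

Lemma exponent_gt1 n (l : nat -> nat) j : (j < n)%N -> (0 < l j)%N ->
  ~~ ((n == 1%N) && (l 0%N == 1%N)) -> (1 < l j * n)%N.
Proof.
move=> jn lj; have [n1|n1] := eqVneq n 1%N; last by nia.
have j0 : j = 0%N by lia.
by subst; lia.
Qed.

Lemma splitting_set_elt B (I : {set 'I_(set_r B).+1}) : B \in kblocks ->
  (forall al be : 'I_(set_r B).+1 -> CC,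
     \sum_(k in I) al k *: col k (d_A (block_data B)) =
     \sum_(k in ~: I) be k *: col k (d_A (block_data B)) ->
     \sum_(k in I) al k *: col k (d_A (block_data B)) = 0) ->
  splitting (set_elt B @: I).
Proof.
move=> HB trivI v Kv; set Au := d_A (block_data B); set x := set_proj B v.
have Ax : Au *m x = 0 by apply/eqP; rewrite block_data_ker // set_proj_kerJ.
have xI0 : \sum_(k in I) x k 0 *: col k Au = 0.
  apply: (trivI _ (fun k => - x k 0)).
  move/eqP: Ax; rewrite mulmx_col_sum (bigID (mem I)) /= addr_eq0 => /eqP ->.
  by rewrite -sumrN; apply: eq_big => k; rewrite ?inE ?scaleNr.
rewrite -(set_ext_restrict B (kblock_gt0 HB)) -/x.
apply/eqP; rewrite -block_data_ker //; apply/eqP.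
rewrite -[RHS]xI0 mulmx_col_sum [RHS]big_mkcond; apply: eq_bigr => k _.
by rewrite restrictE; case: ifP; rewrite ?scale0r.
Qed.

Lemma indecomposable_block_data B : B \in kblocks -> indecomposable (block_data B).
Proof.
move=> HB; have B_gt0 := kblock_gt0 HB.
split => [I I0 IT|k j /= lj]; last first.
  have [_ _ _ _ l_gt0] := HD; apply: exponent_gt1 (l_gt0 _ _ lj) _ => //.
  by have := kblock_not_unit HB (set_elt_mem B B_gt0 k); rewrite inE.
apply: NNPP => nI; have /set0Pn [k0 k0I] := I0.
have sI : splitting (set_elt B @: I).
  apply: splitting_set_elt => // al be E; apply/eqP/negPn/negP => nz.
  by apply: nI; exists al, be.
have := block_min sI (imset_f (set_elt B) k0I).
rewrite (kblock_block _ HB (set_elt_mem B B_gt0 k0)) => /subsetP sub.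
case/negP: IT; apply/eqP/setP => k; rewrite inE.
by rewrite -(mem_imset _ _ (set_elt_inj B B_gt0)) sub ?set_elt_mem.
Qed.

Definition nfactors := size kblock_seq.
Definition factor (u : 'I_nfactors) : data := block_data (nth set0 kblock_seq u).
Definition nvars_factor (u : 'I_nfactors) : nat := nvars (factor u).
Definition nfactor_vars : nat := \sum_u nvars_factor u.

Lemma nth_kblock_seq (u : 'I_nfactors) : nth set0 kblock_seq u \in kblocks.
Proof. by rewrite -[_ \in kblocks](mem_enum kblocks) mem_nth. Qed.

Lemma index_kblock_seq {B} : B \in kblocks -> (index B kblock_seq < nfactors)%N.
Proof. by move=> HB; rewrite index_mem mem_enum. Qed.

Lemma factor_index {B} (HB : B \in kblocks) :
  factor (Ordinal (index_kblock_seq HB)) = block_data B.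
Proof. by rewrite /factor /= nth_index // mem_enum. Qed.

(* The variable T_ij of a block carrying kernel vectors becomes the variable
   of the same name in the factor of that block. *)
Definition factor_pos (i : 'I_r.+1) (j : nat) : nat :=
  offset nvars_factor (index (block i) kblock_seq) +
  (offset (d_ns (block_data (block i))) (index i (enum (block i))) + j).

Lemma factor_pos_set_elt (u : 'I_nfactors) k j :
  factor_pos (set_elt (nth set0 kblock_seq u) k) j =
  offset nvars_factor u + (offset (d_ns (factor u)) k + j).
Proof.
have HB := nth_kblock_seq u.
rewrite /factor_pos (kblock_block _ HB (set_elt_mem _ (kblock_gt0 HB) k)).
by rewrite index_set_elt ?kblock_gt0 // index_uniq ?enum_uniq.
Qed.

Lemma factor_pos_inner_ltn {i j} (nc : carries_ker (block i)) :
  (j < d_ns D i)%N ->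
  (offset (d_ns (block_data (block i))) (index i (enum (block i))) + j <
   nvars_factor (Ordinal (index_kblock_seq (block_kblock nc))))%N.
Proof.
move=> lj; have HB := block_kblock nc.
have [lk ek] := set_elt_index _ (kblock_gt0 HB) (block_mem i).
rewrite /nvars_factor factor_index /nvars addn0.
by apply: (@offset_ltn _ _ (Ordinal lk)); rewrite /= /set_elt ek.
Qed.

Lemma factor_pos_ltn {i j} : carries_ker (block i) -> (j < d_ns D i)%N ->
  (factor_pos i j < nfactor_vars)%N.
Proof. by move=> nc lj; apply: offset_ltn (factor_pos_inner_ltn nc lj). Qed.

Lemma factor_pos_inj {i i' j j'} :
  carries_ker (block i) -> carries_ker (block i') ->
  (j < d_ns D i)%N -> (j' < d_ns D i')%N ->
  factor_pos i j = factor_pos i' j' -> i = i' /\ j = j'.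
Proof.
move=> nc nc' lj lj' E.
have [/(congr1 val) /= uu {}E] :=
  offset_inj (factor_pos_inner_ltn nc lj) (factor_pos_inner_ltn nc' lj') E.
have BB : block i = block i'.
  move/(congr1 (nth set0 kblock_seq)): uu.
  by rewrite !nth_index ?mem_enum ?block_kblock.
rewrite BB in E; have HB := block_kblock nc'; set B := block i' in E HB.
have iB : i \in B by rewrite /B -BB block_mem.
have [lk ek] := set_elt_index B (kblock_gt0 HB) iB.
have [lk' ek'] := set_elt_index B (kblock_gt0 HB) (block_mem i').
have [/(congr1 val) /= kk ->] := @offset_inj _ (d_ns (block_data B))
  (Ordinal lk) (Ordinal lk') j j' ltac:(by rewrite /= /set_elt ek)
  ltac:(by rewrite /= /set_elt ek') E.
by rewrite -ek -ek' kk.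
Qed.

Lemma factor_pos_surj q : (q < nfactor_vars)%N ->
  exists i j, [/\ carries_ker (block i), (j < d_ns D i)%N & factor_pos i j = q].
Proof.
move=> /offset_surj [u [s [+ ->]]]; rewrite /nvars_factor /nvars addn0.
move=> /offset_surj [k [j [lj ->]]]; have HB := nth_kblock_seq u.
have kB := set_elt_mem _ (kblock_gt0 HB) k.
exists (set_elt (nth set0 kblock_seq u) k), j; split => //.
  by rewrite (kblock_block _ HB kB); case/kblockP: HB.
exact: factor_pos_set_elt.
Qed.

Definition var_idx (p : nat) : 'I_r.+1 :=
  odflt ord0 [pick i : 'I_r.+1 | (offs D i <= p < offs D i + d_ns D i)%N].

Lemma var_idx_spec {p} : (p < d_n D)%N ->
  (offs D (var_idx p) <= p < offs D (var_idx p) + d_ns D (var_idx p))%N.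
Proof.
move=> lp; have [i [j [lj E]]] := @offset_surj _ (d_ns D) p lp.
rewrite /var_idx; case: pickP => [i' //|H]; move: (H i).
by rewrite E /offs -/(offset _ _) leq_addr ltn_add2l lj.
Qed.

Lemma offs_ltn {i j} : (j < d_ns D i)%N -> (offs D i + j < d_n D)%N.
Proof. exact: offset_ltn. Qed.

Lemma offs_ltn_nvars {i j} : (j < d_ns D i)%N -> (offs D i + j < nvars D)%N.
Proof. by move=> lj; apply: leq_trans (offs_ltn lj) (leq_addr _ _). Qed.

Lemma var_idx_offs {i j} : (j < d_ns D i)%N -> var_idx (offs D i + j) = i.
Proof.
move=> lj; have /andP [h1 h2] := var_idx_spec (offs_ltn lj).
set i' := var_idx _ in h1 h2 *.
have E : (offs D i + j = offs D i' + (offs D i + j - offs D i'))%N by rewrite subnKC.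
have lj' : (offs D i + j - offs D i' < d_ns D i')%N by rewrite ltn_subLR.
by have [-> _] := offset_inj lj lj' E.
Qed.

Lemma ns_gt0 i : (0 < d_ns D i)%N.
Proof. by case: HD => _ + _ _ _; apply. Qed.

Lemma offs0_ltn i : (offs D i < d_n D)%N.
Proof. by have := offs_ltn (ns_gt0 i); rewrite addn0. Qed.

Lemma offs0_ltn_nvars i : (offs D i < nvars D)%N.
Proof. exact: leq_trans (offs0_ltn i) (leq_addr _ _). Qed.

Lemma var_idx_offs0 i : var_idx (offs D i) = i.
Proof. by have := var_idx_offs (ns_gt0 i); rewrite addn0. Qed.

Definition kblock_var (p : nat) := (p < d_n D)%N && carries_ker (block (var_idx p)).
Definition pivot_var (p : nat) := (p < d_n D)%N && (var_idx p \in J).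
Definition free_vars :=
  [set p : 'I_(nvars D) | ~~ pivot_var p && ~~ kblock_var p].
Definition nfree := #|free_vars|.

Definition new_pos (p : nat) : nat :=
  if kblock_var p then factor_pos (var_idx p) (p - offs D (var_idx p))%N
  else (nfactor_vars + index p (map val (enum free_vars)))%N.

Local Notation ntens := (tens_nvars factor nfree).

Lemma kblock_var_not_pivot p : kblock_var p -> ~~ pivot_var p.
Proof.
case/andP => lp nc; rewrite /pivot_var lp /=.
by apply: contraL nc; apply: pivot_free.
Qed.

Lemma new_pos_kblock i j : carries_ker (block i) -> (j < d_ns D i)%N ->
  new_pos (offs D i + j) = factor_pos i j.
Proof.
move=> nc lj.
have kv : kblock_var (offs D i + j) by rewrite /kblock_var offs_ltn ?var_idx_offs.
by rewrite /new_pos kv var_idx_offs // addKn.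
Qed.

Lemma kblock_var_pos {p} : kblock_var p ->
  exists i j, [/\ carries_ker (block i), (j < d_ns D i)%N & new_pos p = factor_pos i j].
Proof.
move=> kv; have /andP [lp nc] := kv; have /andP [h1 h2] := var_idx_spec lp.
exists (var_idx p), (p - offs D (var_idx p))%N; split => //; first by rewrite ltn_subLR.
by rewrite /new_pos kv.
Qed.

Lemma new_pos_free {p : 'I_(nvars D)} : p \in free_vars ->
  new_pos p = (nfactor_vars + index p (enum free_vars))%N.
Proof.
by rewrite inE => /andP [_ /negbTE nkv]; rewrite /new_pos nkv (index_map val_inj).
Qed.

Lemma new_pos_ltn {p : 'I_(nvars D)} : ~~ pivot_var p -> (new_pos p < ntens)%N.
Proof.
move=> nJ; have [kv|nkv] := boolP (kblock_var p).
  have [i [j [nc lj ->]]] := kblock_var_pos kv.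
  exact: leq_trans (factor_pos_ltn nc lj) (leq_addr _ _).
have pF : p \in free_vars by rewrite inE nJ.
by rewrite new_pos_free // ltn_add2l /nfree cardE index_mem mem_enum.
Qed.

Lemma new_pos_inj {p p' : 'I_(nvars D)} : ~~ pivot_var p -> ~~ pivot_var p' ->
  new_pos p = new_pos p' -> p = p'.
Proof.
move=> nJ nJ'.
have [kv|nkv] := boolP (kblock_var p); have [kv'|nkv'] := boolP (kblock_var p').
- have /andP [lp nc] := kv; have /andP [lp' nc'] := kv'.
  have /andP [h1 h2] := var_idx_spec lp; have /andP [h1' h2'] := var_idx_spec lp'.
  have lj : (p - offs D (var_idx p) < d_ns D (var_idx p))%N by rewrite ltn_subLR.
  have lj' : (p' - offs D (var_idx p') < d_ns D (var_idx p'))%N by rewrite ltn_subLR.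
  rewrite /new_pos kv kv' => /(factor_pos_inj nc nc' lj lj') [ii jj].
  by apply: val_inj; rewrite /= -(subnKC h1) -(subnKC h1') jj ii.
- have [i [j [nc lj ->]]] := kblock_var_pos kv.
  rewrite new_pos_free ?inE ?nJ' // => E; move: (factor_pos_ltn nc lj).
  by rewrite E ltnNge leq_addr.
- have [i [j [nc lj ->]]] := kblock_var_pos kv'.
  rewrite new_pos_free ?inE ?nJ // => E; move: (factor_pos_ltn nc lj).
  by rewrite -E ltnNge leq_addr.
- rewrite !new_pos_free ?inE ?nJ ?nJ' // => /addnI E.
  have pF : p \in enum free_vars by rewrite mem_enum inE nJ.
  have pF' : p' \in enum free_vars by rewrite mem_enum inE nJ'.
  by rewrite -(nth_index p pF) E nth_index.
Qed.

Lemma new_pos_surj {q} : (q < ntens)%N ->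
  exists2 p : 'I_(nvars D), ~~ pivot_var p & new_pos p = q.
Proof.
move=> lq; have [/factor_pos_surj [i [j [nc lj <-]]]|hq] := ltnP q nfactor_vars.
  exists (Ordinal (offs_ltn_nvars lj)); last exact: new_pos_kblock.
  by apply: kblock_var_not_pivot; rewrite /kblock_var offs_ltn ?var_idx_offs.
have lq' : (q - nfactor_vars < nfree)%N by rewrite ltn_subLR.
have [p0 _] : exists p0, p0 \in free_vars.
  by apply/set0Pn; rewrite -card_gt0 (leq_trans _ lq').
set p := nth p0 (enum free_vars) (q - nfactor_vars).
have pF : p \in free_vars by rewrite -mem_enum mem_nth // -cardE.
exists p; first by move: pF; rewrite inE => /andP [].
by rewrite new_pos_free // index_uniq ?enum_uniq ?subnKC // -cardE.
Qed.

Definition Tmon_tens (i : 'I_r.+1) : Pol ntens :=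
  \prod_(j < d_ns D i) Xv ntens (new_pos (offs D i + j)) ^+ d_l D i j.

Definition pivot_elim (j : 'I_r.+1) : Pol ntens :=
  - \sum_(i < r.+1 | i \notin J) w j i 0 *: Tmon_tens i.

Definition to_tens (p : 'I_(nvars D)) : Pol ntens :=
  if pivot_var p then pivot_elim (var_idx p) else Xv ntens (new_pos p).

Definition of_tens (q : 'I_ntens) : Pol (nvars D) :=
  if [pick p : 'I_(nvars D) | ~~ pivot_var p && (new_pos p == q)] is Some p
  then 'X_p else 0.

Lemma to_tensE {p : 'I_(nvars D)} : ~~ pivot_var p -> to_tens p = Xv ntens (new_pos p).
Proof. by rewrite /to_tens => /negbTE ->. Qed.

Lemma of_tensE {p : 'I_(nvars D)} : ~~ pivot_var p ->
  subst of_tens (Xv ntens (new_pos p)) = 'X_p.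
Proof.
move=> nJ; rewrite (substXv_ltn _ (new_pos_ltn nJ)) /of_tens.
case: pickP => [p' /andP [nJ' /eqP E]|/(_ p)]; last by rewrite nJ eqxx.
by rewrite (new_pos_inj nJ' nJ E).
Qed.

Lemma offs_not_pivot {i j} :
  i \notin J -> (j < d_ns D i)%N -> ~~ pivot_var (offs D i + j).
Proof. by move=> iJ lj; rewrite /pivot_var var_idx_offs // (negbTE iJ) andbF. Qed.

Lemma Tmon_to_tens i : i \notin J -> subst to_tens (Tmon D i) = Tmon_tens i.
Proof.
move=> iJ; rewrite /Tmon subst_prod; apply: eq_bigr => j _.
rewrite substXn (substXv_ltn _ (offs_ltn_nvars (ltn_ord j))) to_tensE //.
exact: offs_not_pivot.
Qed.

Lemma Tmon_tens_of_tens i : i \notin J -> subst of_tens (Tmon_tens i) = Tmon D i.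
Proof.
move=> iJ; rewrite /Tmon_tens subst_prod; apply: eq_bigr => j _.
have lj := offs_ltn_nvars (ltn_ord j).
have nJ : ~~ pivot_var (Ordinal lj) := offs_not_pivot iJ (ltn_ord j).
by rewrite substXn (of_tensE nJ) (XvE_ltn lj).
Qed.

Lemma Tmon_pivot j : j \in J -> Tmon D j = Xv (nvars D) (offs D j).
Proof.
move=> /pivot_unit_idx; rewrite inE => /andP [/eqP ns1 /eqP l1].
by rewrite /Tmon ns1 big_ord1 /= addn0 l1 expr1.
Qed.

Lemma Tmon_pivot_to_tens i : i \in J -> subst to_tens (Tmon D i) = pivot_elim i.
Proof.
move=> iJ; rewrite Tmon_pivot // (substXv_ltn _ (offs0_ltn_nvars i)).
by rewrite /to_tens /pivot_var /= var_idx_offs0 iJ offs0_ltn.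
Qed.

Lemma pivot_ker j : j \in J -> A *m w j = 0.
Proof. by move=> jJ; have [] := HJ.2 j jJ. Qed.

Lemma pivot_diag j : j \in J -> w j j 0 = 1.
Proof. by move=> jJ; have [] := HJ.2 j jJ. Qed.

Lemma pivot_offdiag j j' : j \in J -> j' \in J -> j' != j -> w j j' 0 = 0.
Proof. by move=> jJ; have [_ _] := HJ.2 j jJ; apply. Qed.

Lemma g_v_pivot j : j \in J ->
  g_v D (w j) = Tmon D j + \sum_(i < r.+1 | i \notin J) w j i 0 *: Tmon D i.
Proof.
move=> jJ; rewrite /g_v (bigID (mem J)) /=; congr (_ + _).
rewrite (bigD1 j) //= pivot_diag // scale1r big1 ?addr0 // => i /andP [iJ ij].
by rewrite pivot_offdiag // scale0r.
Qed.

Lemma of_tensK (s : 'I_(nvars D)) :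
  in_ideal (rel_gens D) (subst of_tens (to_tens s) - 'X_s).
Proof.
have [Js|nJs] := boolP (pivot_var s); last first.
  by rewrite to_tensE // of_tensE // subrr; apply: in_ideal0.
have /andP [ls jJ] := Js; set j := var_idx s in jJ.
have Xs : 'X_s = Tmon D j.
  have /andP [h1 h2] := var_idx_spec ls.
  move: h2; rewrite -/j; have := pivot_unit_idx jJ; rewrite inE => /andP [/eqP -> _].
  rewrite addn1 ltnS => h2; rewrite Tmon_pivot // -XvE; congr (Xv _ _).
  by apply/eqP; rewrite eqn_leq h1 h2.
rewrite /to_tens Js -/j /pivot_elim substN subst_sum.
under eq_bigr => i iJ do rewrite substZ Tmon_tens_of_tens //.
rewrite Xs -opprD addrC -g_v_pivot //; apply/in_idealN/in_ideal_gen.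
by exists (w j); rewrite pivot_ker.
Qed.

Lemma to_tensK (q : 'I_ntens) :
  in_ideal (tens_gens factor nfree) (subst to_tens (of_tens q) - 'X_q).
Proof.
rewrite /of_tens; case: pickP => [p /andP [nJ /eqP E]|].
  by rewrite substX to_tensE // E XvE subrr; apply: in_ideal0.
have [p nJ E] := new_pos_surj (ltn_ord q).
by move=> /(_ p); rewrite nJ E eqxx.
Qed.

Lemma tens_embed_g_v (u : 'I_nfactors) (x : 'cV[CC]_(d_r (factor u)).+1) :
  subst (fun s : 'I_(nvars (factor u)) => Xv ntens (tens_offs factor u + s))
        (g_v (factor u) x) =
  \sum_k x k 0 *: Tmon_tens (set_elt (nth set0 kblock_seq u) k).
Proof.
have HB := nth_kblock_seq u; set B := nth set0 kblock_seq u in HB *.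
rewrite /g_v subst_sum; apply: eq_bigr => k _; rewrite substZ; congr (_ *: _).
rewrite /Tmon subst_prod /Tmon_tens; apply: eq_bigr => j _; rewrite substXn.
have h : (offs (factor u) k + j < nvars (factor u))%N.
  by rewrite /nvars addn0; apply: offset_ltn.
rewrite (substXv_ltn _ h) /= new_pos_kblock //.
  by rewrite factor_pos_set_elt.
by rewrite (kblock_block _ HB (set_elt_mem _ (kblock_gt0 HB) k)); case/kblockP: HB.
Qed.

Lemma of_tens_gens g :
  tens_gens factor nfree g -> in_ideal (rel_gens D) (subst of_tens g).
Proof.
case=> u [g0 [[x [Ax ->]] ->]]; rewrite tens_embed_g_v subst_sum.
have HB := nth_kblock_seq u; set B := nth set0 kblock_seq u in x Ax HB *.
have B_gt0 := kblock_gt0 HB.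
rewrite (eq_bigr (fun k => x k 0 *: Tmon D (set_elt B k))) => [|k _]; last first.
  by rewrite substZ Tmon_tens_of_tens // (kblock_not_pivot HB (set_elt_mem _ B_gt0 k)).
apply: in_ideal_gen; exists (set_ext B x); split.
  by apply/eqP; rewrite -block_data_ker //; apply/eqP.
rewrite /g_v (sum_set_elt B B_gt0) => [|i iB]; last by rewrite mxE (negbTE iB) scale0r.
by apply: eq_bigr => k _; rewrite set_ext_elt.
Qed.

Definition pivot_reduce (v : 'cV[CC]_r.+1) : 'cV[CC]_r.+1 :=
  v - \sum_(j in J) v j 0 *: w j.

Lemma pivot_reduceE v i :
  pivot_reduce v i 0 = v i 0 - \sum_(j in J) v j 0 * w j i 0.
Proof. by rewrite !mxE summxE; congr (_ - _); apply: eq_bigr => j _; rewrite !mxE. Qed.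

Lemma pivot_reduce_pivot v i : i \in J -> pivot_reduce v i 0 = 0.
Proof.
move=> iJ; rewrite pivot_reduceE (bigD1 i) // pivot_diag // mulr1.
rewrite big1 /= ?addr0 ?subrr // => j /andP [jJ ji].
by rewrite pivot_offdiag ?mulr0 // eq_sym.
Qed.

Lemma kerJ_pivot_reduce {v} : A *m v = 0 -> kerJ (pivot_reduce v).
Proof.
move=> Av; split => [|i]; last exact: pivot_reduce_pivot.
rewrite mulmxBr Av sub0r mulmx_sumr big1 ?oppr0 // => j jJ.
by rewrite -scalemxAr pivot_ker // scaler0.
Qed.

(* Each T_j, j in J, becomes minus the rest of the relation g_{w_j}; after
   substitution g_v only involves the pivot-free vector pivot_reduce v. *)
Lemma to_tens_g_v v :
  subst to_tens (g_v D v) = \sum_i pivot_reduce v i 0 *: Tmon_tens i.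
Proof.
rewrite /g_v subst_sum (bigID (mem J)) /= [RHS](bigID (mem J)) /=.
rewrite [X in _ = X + _]big1 ?add0r => [|i iJ]; last first.
  by rewrite pivot_reduce_pivot ?scale0r.
under eq_bigr => i iJ do rewrite substZ Tmon_pivot_to_tens //.
under [X in _ + X = _]eq_bigr => i iJ do rewrite substZ Tmon_to_tens //.
under [RHS]eq_bigr => i iJ do rewrite pivot_reduceE scalerBl.
rewrite sumrB addrC; congr (_ + _); rewrite /pivot_elim.
under eq_bigr => j jJ do rewrite scalerN scaler_sumr.
rewrite sumrN exchange_big /=; congr (- _); apply: eq_bigr => i iJ.
by rewrite scaler_suml; apply: eq_bigr => j jJ; rewrite scalerA.
Qed.

Lemma sum_kblocks {V : lmodType CC} (F : 'I_r.+1 -> V) {v} : kerJ v ->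
  \sum_i v i 0 *: F i =
  \sum_(u < nfactors) \sum_k v (set_elt (nth set0 kblock_seq u) k) 0 *:
                F (set_elt (nth set0 kblock_seq u) k).
Proof.
move=> Kv; rewrite (bigID (fun i => carries_ker (block i))) /=.
rewrite [X in _ + X]big1 ?addr0 => [|i nc]; last first.
  by rewrite (kerJ_free_block nc Kv) scale0r.
rewrite (partition_big block (mem kblocks)) /= => [|i]; last exact: block_kblock.
rewrite -big_enum /= (big_nth set0) big_mkord; apply: eq_bigr => u _.
have HB := nth_kblock_seq u; set B := nth set0 kblock_seq u in HB *.
rewrite -(big_set_elt B (kblock_gt0 HB) (fun i => v i 0 *: F i)).
apply: eq_bigl => i.
apply/andP/idP => [[_ /eqP <-]|iB]; first exact: block_mem.
by rewrite (kblock_block _ HB iB) eqxx; case/kblockP: HB.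
Qed.

Lemma to_tens_gens g :
  rel_gens D g -> in_ideal (tens_gens factor nfree) (subst to_tens g).
Proof.
case=> v [Av ->]; rewrite to_tens_g_v (sum_kblocks _ (kerJ_pivot_reduce Av)).
apply: in_ideal_sum => u _; apply: in_ideal_gen.
have HB := nth_kblock_seq u; set B := nth set0 kblock_seq u in HB *.
exists u, (g_v (factor u) (set_proj B (pivot_reduce v))); split.
  exists (set_proj B (pivot_reduce v)); split => //; apply/eqP.
  by rewrite block_data_ker // (set_proj_kerJ HB (kerJ_pivot_reduce Av)).
by rewrite tens_embed_g_v; apply: eq_bigr => k _; rewrite [set_proj _ _ _ _]mxE.
Qed.

Lemma leq_m_nfree : (d_m D <= nfree)%N.
Proof.
rewrite -[d_m D]card_ord -(card_imset _ (@rshift_inj (d_n D) (d_m D))).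
apply: subset_leq_card; apply/subsetP => _ /imsetP [k _ ->].
by rewrite inE /pivot_var /kblock_var /= ltnNge leq_addr.
Qed.

Theorem tensor_decomposition :
  exists (t : nat) (Ds : 'I_t -> data) (m' : nat),
    [/\ forall u, valid_data (Ds u),
        forall u, indecomposable (Ds u),
        forall u, d_m (Ds u) = 0%N,
        (d_m D <= m')%N
      & presented_iso (rel_gens D) (tens_gens Ds m')].
Proof.
exists nfactors, factor, nfree; split => //.
- by move=> u; apply/valid_block_data/nth_kblock_seq.
- by move=> u; apply/indecomposable_block_data/nth_kblock_seq.
- exact: leq_m_nfree.
exact: presented_iso_by_subst to_tens_gens of_tens_gens of_tensK to_tensK.
Qed.

End Decomposition.

Theorem proposition3p2 (D : data) :
  valid_data D ->
  exists (t : nat) (Ds : 'I_t -> data) (m' : nat),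
    [/\ forall u, valid_data (Ds u),
        forall u, indecomposable (Ds u),
        forall u, d_m (Ds u) = 0%N,
        (d_m D <= m')%N
      & presented_iso (rel_gens D) (tens_gens Ds m')].
Proof.
move=> HD; have [J [w [HJ HP]]] := exists_maximal_pivot_family (d_A D) (unit_idx D).
exact: tensor_decomposition D HD J w HJ HP.
Qed.
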